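(* (A) The Lie algebra $\mathfrak t_{1,n}$ is isomorphic to the Lie algebra with generators $x_i,y_i$ ($i=1,\dots,n$) and relations: $[x_i,y_j]=[x_j,y_i]$ ($i\ne j$); $[x_i,x_j]=[y_i,y_j]=0$ (all $i,j$); $[\sum_j x_j,y_i]=[\sum_j y_j,x_i]=0$ (all $i$); $[x_i,[x_j,y_k]]=[y_i,[y_j,x_k]]=0$ ($i,j,k$ distinct); the isomorphism sends $x_i\mapsto x_i$, $y_i\mapsto y_i$, and $t_{ij}\mapsto[x_i,y_j]$. (B) $\mathfrak t_{1,n}$ is also isomorphic to the Lie algebra with generators $a_i,b_i$ ($i=1,\dots,n$) and relations: $[a_i,a_j]=[b_i,b_j]=0$ (all $i,j$); $[a_1,b_j]=[b_1,a_j]=0$ (all $j$); $[a_j,b_k]=[a_k,b_j]$ (all $j,k$); $[a_i,c_{jk}]=[b_i,c_{jk}]=0$ for $i\le j\le k$, where $c_{jk}:=[b_k,a_k-a_j]$; the isomorphism is given by $a_i=\sum_{j=i}^n x_j$, $b_i=\sum_{j=i}^n y_j$.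
   Context: $\mathfrak t_{1,n}$ is the Lie algebra (over a field of characteristic $0$) with generators $x_i,y_i$ ($1\le i\le n$), $t_{ij}$ ($i\ne j$) and relations $t_{ij}=t_{ji}$, $[t_{ij},t_{ik}+t_{jk}]=0$, $[t_{ij},t_{kl}]=0$, $[x_i,y_j]=t_{ij}$ ($i\ne j$), $[x_i,x_j]=[y_i,y_j]=0$, $[x_i,y_i]=-\sum_{j\ne i}t_{ij}$, $[x_i,t_{jk}]=[y_i,t_{jk}]=0$, $[x_i+x_j,t_{ij}]=[y_i+y_j,t_{ij}]=0$, where $i,j,k,l$ denote distinct indices. *)

From HB Require Import structures.
From mathcomp Require Import all_boot all_order all_algebra.
Set Implicit Arguments. Unset Strict Implicit. Unset Printing Implicit Defensive.
Import GRing.Theory.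
Local Open Scope ring_scope.

Record lieAlgebra (K : fieldType) := LieAlgebra {
  lie_sort :> lmodType K;
  br : lie_sort -> lie_sort -> lie_sort;
  br_linl : forall (a : K) (x y z : lie_sort), br (a *: x + y) z = a *: br x z + br y z;
  br_linr : forall (a : K) (x y z : lie_sort), br z (a *: x + y) = a *: br z x + br z y;
  br_alt : forall x : lie_sort, br x x = 0;
  br_jacobi : forall x y z : lie_sort,
      br x (br y z) + br y (br z x) + br z (br x y) = 0 }.
Arguments br {K L} x y : rename.

Record lieHom (K : fieldType) (L M : lieAlgebra K) := LieHom {
  lie_fun :> L -> M;
  lie_fun_lin : forall (a : K) (x y : L), lie_fun (a *: x + y) = a *: lie_fun x + lie_fun y;
  lie_fun_br : forall x y : L, lie_fun (br x y) = br (lie_fun x) (lie_fun y) }.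

Section Presentations.
Variables (K : fieldType) (n : nat).

(* Defining relations of t_{1,n} on families x_i, y_i, t_ij (t_ij only used for i != j). *)
Definition t1n_rels (M : lieAlgebra K) (x y : 'I_n -> M) (t : 'I_n -> 'I_n -> M) : Prop :=
  (forall i j, i != j -> t i j = t j i) /\
      (forall i j k, i != j -> i != k -> j != k -> br (t i j) (t i k + t j k) = 0) /\
      (forall i j k l, i != j -> i != k -> i != l -> j != k -> j != l -> k != l ->
         br (t i j) (t k l) = 0) /\
      (forall i j, i != j -> br (x i) (y j) = t i j) /\
      (forall i j, i != j -> br (x i) (x j) = 0 /\ br (y i) (y j) = 0) /\
      (forall i, br (x i) (y i) = - \sum_(j < n | j != i) t i j) /\
      (forall i j k, i != j -> i != k -> j != k ->
         br (x i) (t j k) = 0 /\ br (y i) (t j k) = 0) /\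
      (forall i j, i != j -> br (x i + x j) (t i j) = 0 /\ br (y i + y j) (t i j) = 0).

Definition is_t1n (L : lieAlgebra K) (x y : 'I_n -> L) (t : 'I_n -> 'I_n -> L) : Prop :=
  t1n_rels x y t /\
  forall (M : lieAlgebra K) (x' y' : 'I_n -> M) (t' : 'I_n -> 'I_n -> M),
    t1n_rels x' y' t' ->
    let P := fun f : lieHom L M => (forall i, f (x i) = x' i) /\ (forall i, f (y i) = y' i)
                                /\ (forall i j, i != j -> f (t i j) = t' i j) in
    (exists f, P f) /\ (forall f g, P f -> P g -> f =1 g).

Definition relsA (M : lieAlgebra K) (x y : 'I_n -> M) : Prop :=
  [/\ (forall i j, i != j -> br (x i) (y j) = br (x j) (y i)),
      (forall i j, br (x i) (x j) = 0 /\ br (y i) (y j) = 0),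
      (forall i, br (\sum_(j < n) x j) (y i) = 0 /\ br (\sum_(j < n) y j) (x i) = 0) &
      (forall i j k, i != j -> i != k -> j != k ->
         br (x i) (br (x j) (y k)) = 0 /\ br (y i) (br (y j) (x k)) = 0)].

Definition is_presA (L : lieAlgebra K) (x y : 'I_n -> L) : Prop :=
  relsA x y /\
  forall (M : lieAlgebra K) (x' y' : 'I_n -> M), relsA x' y' ->
    let P := fun f : lieHom L M => (forall i, f (x i) = x' i) /\ (forall i, f (y i) = y' i) in
    (exists f, P f) /\ (forall f g, P f -> P g -> f =1 g).

(* Relations of presentation (B); indices are 0-based, so a_1 is the index of value 0. *)
Definition cB (M : lieAlgebra K) (a b : 'I_n -> M) (j k : 'I_n) : M :=
  br (b k) (a k - a j).

Definition relsB (M : lieAlgebra K) (a b : 'I_n -> M) : Prop :=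
  [/\ (forall i j, br (a i) (a j) = 0 /\ br (b i) (b j) = 0),
      (forall i j, nat_of_ord i = 0%N -> br (a i) (b j) = 0 /\ br (b i) (a j) = 0),
      (forall j k, br (a j) (b k) = br (a k) (b j)) &
      (forall i j k : 'I_n, (i <= j)%N -> (j <= k)%N ->
         br (a i) (cB a b j k) = 0 /\ br (b i) (cB a b j k) = 0)].

Definition is_presB (L : lieAlgebra K) (a b : 'I_n -> L) : Prop :=
  relsB a b /\
  forall (M : lieAlgebra K) (a' b' : 'I_n -> M), relsB a' b' ->
    let P := fun f : lieHom L M => (forall i, f (a i) = a' i) /\ (forall i, f (b i) = b' i) in
    (exists f, P f) /\ (forall f g, P f -> P g -> f =1 g).

End Presentations.

From HB Require Import structures.
From mathcomp Require Import all_boot all_order all_algebra zify.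
Import GRing.Theory.
Local Open Scope ring_scope.
Set Implicit Arguments. Unset Strict Implicit. Unset Printing Implicit Defensive.

(* (A) With t_ij := [x_i, y_j], the relations of t_{1,n} and of (A) imply each
   other: [x_i, y_i] = -sum_{j <> i} t_ij rewrites [sum_j x_j, y_i] = 0, the
   relation [x_i + x_j, t_ij] = 0 is [x_i, [sum_k x_k, y_j]] = 0 once the terms
   killed by the cubic relations are dropped, and the relations
   [t_ij, t_ik + t_jk] = [t_ij, t_kl] = 0 follow by expanding t_ik = [x_i, y_k]
   etc. with the Jacobi identity.
   (B) a_i, b_i are the tail sums of x, y and, conversely, x_i = a_i - a_{i+1},
   y_i = b_i - b_{i+1} (with a_{n+1} = b_{n+1} = 0).  Both substitutions carry
   the relations of (A) to those of (B) and back: up to symmetry the cubic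
   relations of (A) only need to be checked on increasing triples i < j < k,
   where they become the vanishing of [a_i, c_jk] and [b_i, c_jk].
   In each case the two universal properties provide mutually inverse
   homomorphisms, since an endomorphism fixing the generators is the identity. *)

Section LieAlgebraTheory.
Variables (K : fieldType) (L : lieAlgebra K).
Implicit Types x y z : L.

Lemma brDl x y z : br (x + y) z = br x z + br y z.
Proof. by have := br_linl 1 x y z; rewrite !scale1r. Qed.

Lemma brDr x y z : br z (x + y) = br z x + br z y.
Proof. by have := br_linr 1 x y z; rewrite !scale1r. Qed.

Lemma br0l z : br 0 z = 0.
Proof. by apply: (addrI (br 0 z)); rewrite -brDl !addr0. Qed.

Lemma br0r z : br z 0 = 0.
Proof. by apply: (addrI (br z 0)); rewrite -brDr !addr0. Qed.

Lemma brZl a x z : br (a *: x) z = a *: br x z.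
Proof. by have := br_linl a x 0 z; rewrite !addr0 br0l addr0. Qed.

Lemma brZr a x z : br z (a *: x) = a *: br z x.
Proof. by have := br_linr a x 0 z; rewrite !addr0 br0r addr0. Qed.

Lemma brNl x z : br (- x) z = - br x z.
Proof. by rewrite -scaleN1r brZl scaleN1r. Qed.

Lemma brNr x z : br z (- x) = - br z x.
Proof. by rewrite -scaleN1r brZr scaleN1r. Qed.

Lemma brBl x y z : br (x - y) z = br x z - br y z.
Proof. by rewrite brDl brNl. Qed.

Lemma brBr x y z : br z (x - y) = br z x - br z y.
Proof. by rewrite brDr brNr. Qed.

Lemma br_suml (I : Type) (r : seq I) (P : pred I) (F : I -> L) z :
  br (\sum_(i <- r | P i) F i) z = \sum_(i <- r | P i) br (F i) z.
Proof. exact: (big_morph (br^~ z) (fun u v => brDl u v z) (br0l z)). Qed.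

Lemma br_sumr (I : Type) (r : seq I) (P : pred I) (F : I -> L) z :
  br z (\sum_(i <- r | P i) F i) = \sum_(i <- r | P i) br z (F i).
Proof. exact: (big_morph (br z) (fun u v => brDr u v z) (br0r z)). Qed.

Lemma br_anti x y : br x y = - br y x.
Proof.
have := br_alt (x + y); rewrite brDl !brDr !br_alt add0r addr0 => /eqP.
by rewrite addr_eq0 => /eqP.
Qed.

Lemma br_derivation x y z : br x (br y z) = br (br x y) z + br y (br x z).
Proof.
have /eqP := br_jacobi x y z; rewrite -addrA addr_eq0 => /eqP ->.
by rewrite (br_anti z (br x y)) (br_anti z x) brNr opprD !opprK addrC.
Qed.

End LieAlgebraTheory.

Section LieHomTheory.
Variables (K : fieldType) (L M N : lieAlgebra K) (f : lieHom L M).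

Lemma lieHomD x y : f (x + y) = f x + f y.
Proof. by have := lie_fun_lin f 1 x y; rewrite !scale1r. Qed.

Lemma lieHom0 : f 0 = 0.
Proof. by apply: (addrI (f 0)); rewrite -lieHomD !addr0. Qed.

Lemma lieHomZ a x : f (a *: x) = a *: f x.
Proof. by have := lie_fun_lin f a x 0; rewrite !addr0 lieHom0 addr0. Qed.

Lemma lieHomB x y : f (x - y) = f x - f y.
Proof. by rewrite lieHomD -scaleN1r lieHomZ scaleN1r. Qed.

Lemma lieHom_sum (I : Type) (r : seq I) (P : pred I) (F : I -> L) :
  f (\sum_(i <- r | P i) F i) = \sum_(i <- r | P i) f (F i).
Proof. exact: (big_morph f lieHomD lieHom0). Qed.

Definition lieHom_comp (g : lieHom M N) : lieHom L N.
Proof.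
refine (@LieHom K L N (fun x => g (f x)) _ _) => [a x y | x y].
  by rewrite !lie_fun_lin.
by rewrite !lie_fun_br.
Defined.

Definition lieHom_id : lieHom L L.
Proof. by refine (@LieHom K L L id _ _). Defined.

End LieHomTheory.

Section TailSums.
Variables (V : zmodType) (n : nat).
Implicit Types (c x : 'I_n -> V) (m k : nat).

(* c_k for every k : nat, with junk value c_k = 0 for k >= n. *)
Definition ext0 c k : V := if insub k is Some i then c i else 0.

Definition tailsum x m : V := \sum_(j < n | (m <= j)%N) x j.

Definition tail_diff c k : V := ext0 c k - ext0 c k.+1.

Lemma ext0_ord c (i : 'I_n) : ext0 c i = c i.
Proof. by rewrite /ext0 valK. Qed.

Lemma ext0_lt c k (kn : (k < n)%N) : ext0 c k = c (Ordinal kn).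
Proof. by rewrite /ext0 insubT. Qed.

Lemma ext0_ge c k : (n <= k)%N -> ext0 c k = 0.
Proof. by move=> nk; rewrite /ext0 insubF // ltnNge nk. Qed.

Lemma tailsum_ge x m : (n <= m)%N -> tailsum x m = 0.
Proof. by move=> nm; rewrite /tailsum big_pred0 // => j; rewrite leqNgt (leq_trans _ nm). Qed.

Lemma tailsum0 x : tailsum x 0 = \sum_(j < n) x j.
Proof. by []. Qed.

Lemma tailsumS x (i : 'I_n) : tailsum x i - tailsum x i.+1 = x i.
Proof.
rewrite /tailsum (bigD1 i) //= (eq_bigl (fun j : 'I_n => i < j)%N) ?addrK // => j.
by rewrite ltn_neqAle andbC eq_sym.
Qed.

Lemma tailsum_split x m k : (m <= k)%N ->
  tailsum x m = tailsum x k + \sum_(j < n | (m <= j < k)%N) x j.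
Proof.
move=> mk; rewrite /tailsum (bigID (fun j : 'I_n => k <= j)%N) /=; congr (_ + _).
  by apply: eq_bigl => j; rewrite andb_idl // => /(leq_trans mk).
by apply: eq_bigl => j; rewrite ltnNge.
Qed.

Lemma tailsum_head x m : tailsum x m = \sum_(j < n) x j - \sum_(j < n | (j < m)%N) x j.
Proof.
apply/eqP; rewrite eq_sym subr_eq (bigID (fun j : 'I_n => m <= j)%N) /=.
by apply/eqP; congr (_ + _); apply: eq_bigl => j; rewrite ltnNge.
Qed.

Lemma tailsum_tail_diff c m : tailsum (fun j => tail_diff c j) m = ext0 c m.
Proof.
have [mn|nm] := leqP m n; last first.
  by rewrite tailsum_ge ?ext0_ge // ltnW.
rewrite /tailsum (eq_bigl (fun j : 'I_n => true && (m <= j)%N)) //.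
rewrite -(big_geq_mkord m n xpredT (tail_diff c)) /tail_diff.
rewrite (eq_bigr (fun j => - (ext0 c j.+1 - ext0 c j))) => [|j _]; last by rewrite opprB.
by rewrite sumrN telescope_sumr // ext0_ge // sub0r opprK.
Qed.

Lemma eq_ext0 c d : c =1 d -> ext0 c =1 ext0 d.
Proof. by move=> cd k; rewrite /ext0; case: insub => // i; apply: cd. Qed.

Lemma ext0_tailsum x k : ext0 (fun i : 'I_n => tailsum x i) k = tailsum x k.
Proof.
have [kn|nk] := ltnP k n; first by rewrite (ext0_lt _ kn).
by rewrite (ext0_ge _ nk) tailsum_ge.
Qed.

End TailSums.

Section LieHomTailSums.
Variables (K : fieldType) (n : nat) (L M : lieAlgebra K) (f : lieHom L M).

Lemma lieHom_ext0 (c : 'I_n -> L) k : f (ext0 c k) = ext0 (fun i => f (c i)) k.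
Proof. by rewrite /ext0; case: insub => //; rewrite lieHom0. Qed.

Lemma lieHom_tail_diff (c : 'I_n -> L) (z : 'I_n -> M) :
  (forall i, f (c i) = tailsum z i) -> forall i : 'I_n, f (tail_diff c i) = z i.
Proof. by move=> fc i; rewrite lieHomB !lieHom_ext0 !(eq_ext0 fc) !ext0_tailsum tailsumS. Qed.

Lemma lieHom_tailsum (z : 'I_n -> L) (c : 'I_n -> M) :
  (forall i, f (z i) = tail_diff c i) -> forall i : 'I_n, f (tailsum z i) = c i.
Proof.
move=> fz i; rewrite -(ext0_ord c) -tailsum_tail_diff /tailsum lieHom_sum.
by apply: eq_bigr => j _; apply: fz.
Qed.

End LieHomTailSums.

Lemma sorted_vanish_distinct (V : zmodType) (F : nat -> nat -> nat -> V) :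
  (forall p q r, (p < q < r)%N -> F p q r = 0) ->
  (forall p q r, F p q r = F q p r) -> (forall p q r, F p q r = F p r q) ->
  forall p q r, p != q -> p != r -> q != r -> F p q r = 0.
Proof.
move=> sorted F12 F23.
have first_lt p q r : (p < q)%N -> q != r -> p != r -> F p q r = 0.
  move=> pq qr pr; have [qr'|rq|e] := ltngtP q r; first by rewrite sorted ?pq.
    have [pr'|rp|e] := ltngtP p r; first by rewrite F23 sorted ?pr'.
      by rewrite F23 F12 sorted ?rp.
    by rewrite e eqxx in pr.
  by rewrite e eqxx in qr.
move=> p q r pq pr qr; have [pq'|qp|e] := ltngtP p q; first exact: first_lt.
  by rewrite F12 first_lt // eq_sym.
by rewrite e eqxx in pq.
Qed.

Section T1nRelations.
Variables (K : fieldType) (n : nat) (M : lieAlgebra K) (x y : 'I_n -> M).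

Lemma t1n_relsA t : t1n_rels x y t -> relsA x y.
Proof.
case=> t_sym [_ [_ [xy_t [xx_yy [xy_diag [x_t _]]]]]].
have sum_xy i : \sum_(j < n | j != i) br (x i) (y j) = \sum_(j < n | j != i) t i j.
  by apply: eq_bigr => j ji; rewrite xy_t // eq_sym.
have sum_yx i : \sum_(j < n | j != i) br (x j) (y i) = \sum_(j < n | j != i) t i j.
  by apply: eq_bigr => j ji; rewrite xy_t // t_sym.
split.
- by move=> i j ij; rewrite xy_t // xy_t 1?eq_sym // t_sym.
- move=> i j; have [->|] := eqVneq i j; first by rewrite !br_alt.
  exact: xx_yy.
- move=> i; split; first by rewrite br_suml (bigD1 i) //= xy_diag sum_yx addNr.
  rewrite br_suml (eq_bigr (fun j => - br (x i) (y j))) => [|j _]; last exact: br_anti.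
  by rewrite sumrN (bigD1 i) //= xy_diag sum_xy addNr oppr0.
- move=> i j k ij ik jk; split; first by rewrite xy_t //; case: (x_t i j k ij ik jk).
  rewrite (br_anti (y j)) brNr xy_t 1?eq_sym //.
  by case: (x_t i k j ik ij _) => [|_ ->]; rewrite ?oppr0 // eq_sym.
Qed.

End T1nRelations.

Section RelationsA.
Variables (K : fieldType) (n : nat) (M : lieAlgebra K) (x y : 'I_n -> M).
Hypothesis HA : relsA x y.

Lemma relsA_xy_sym i j : br (x i) (y j) = br (x j) (y i).
Proof. by have [->|ij] := eqVneq i j; [|case: HA => sym _ _ _; apply: sym]. Qed.

Lemma relsA_xx i j : br (x i) (x j) = 0.
Proof. by case: HA => _ xx_yy _ _; case: (xx_yy i j). Qed.

Lemma relsA_yy i j : br (y i) (y j) = 0.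
Proof. by case: HA => _ xx_yy _ _; case: (xx_yy i j). Qed.

Lemma relsA_sumx_y i : br (\sum_(j < n) x j) (y i) = 0.
Proof. by case: HA => _ _ sums _; case: (sums i). Qed.

Lemma relsA_sumy_x i : br (\sum_(j < n) y j) (x i) = 0.
Proof. by case: HA => _ _ sums _; case: (sums i). Qed.

Lemma relsA_x_xy i j k : i != j -> i != k -> j != k ->
  br (x i) (br (x j) (y k)) = 0.
Proof. by case: HA => _ _ _ cubic ij ik jk; case: (cubic i j k ij ik jk). Qed.

Lemma relsA_y_xy i j k : i != j -> i != k -> j != k ->
  br (y i) (br (x j) (y k)) = 0.
Proof.
case: HA => _ _ _ cubic ij ik jk; have kj : k != j by rewrite eq_sym.
by have [_] := cubic i k j ik ij kj; rewrite (br_anti (x j)) brNr => ->; rewrite oppr0.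
Qed.

Lemma relsA_xy_diag i : br (x i) (y i) = - \sum_(j < n | j != i) br (x i) (y j).
Proof.
have : \sum_(j < n) br (x i) (y j) = 0 by rewrite -br_sumr br_anti relsA_sumy_x oppr0.
by rewrite (bigD1 i) //= => /eqP; rewrite addr_eq0 => /eqP.
Qed.

Lemma relsA_xD_xy i j : i != j -> br (x i + x j) (br (x i) (y j)) = 0.
Proof.
move=> ij; have := congr1 (br (x i)) (relsA_sumx_y j).
rewrite br0r br_suml br_sumr (bigD1 i) //= (bigD1 j) /= 1?eq_sym //.
rewrite big1 => [|k /andP [ki kj]]; last by rewrite relsA_x_xy // eq_sym.
by rewrite addr0 [br (x i) (br (x j) _)]br_derivation relsA_xx br0l add0r brDl.
Qed.

Lemma relsA_yD_xy i j : i != j -> br (y i + y j) (br (x i) (y j)) = 0.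
Proof.
move=> ij; have := congr1 (br (y j)) (relsA_sumy_x i).
rewrite br0r br_suml br_sumr (bigD1 i) //= (bigD1 j) /= 1?eq_sym //.
rewrite big1 => [|k /andP [ki kj]]; last first.
  by rewrite (br_anti (y k)) brNr relsA_y_xy ?oppr0 // eq_sym.
rewrite addr0 [br (y j) (br (y i) _)]br_derivation relsA_yy br0l add0r.
rewrite !(br_anti (y _) (x i)) !brNr -opprD => /eqP; rewrite oppr_eq0 => /eqP.
by rewrite brDl.
Qed.

Lemma relsA_t1n : t1n_rels x y (fun i j => br (x i) (y j)).
Proof.
have t_x i j k : i != j -> i != k -> j != k -> br (br (x i) (y j)) (x k) = 0.
  by move=> ij ik jk; rewrite br_anti relsA_x_xy ?oppr0 // eq_sym.
have t_y i j k : i != j -> i != k -> j != k -> br (br (x i) (y j)) (y k) = 0.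
  by move=> ij ik jk; rewrite br_anti relsA_y_xy ?oppr0 // eq_sym.
have t_t i j m k : i != j -> i != k -> j != k ->
    br (br (x i) (y j)) (br (x m) (y k)) = br (br (br (x i) (y j)) (x m)) (y k).
  by move=> ij ik jk; rewrite br_derivation t_y // br0r addr0.
split; first by move=> i j _; exact: relsA_xy_sym.
split.
  move=> i j k ij ik jk; rewrite brDr !t_t // -brDl -brDr.
  by rewrite (br_anti _ (_ + _)) relsA_xD_xy // oppr0 br0l.
split.
  move=> i j k l ij ik il jk jl kl.
  by rewrite t_t // t_x // br0l.
split; first by [].
split; first by move=> i j _; rewrite relsA_xx relsA_yy.
split; first exact: relsA_xy_diag.
split.
  by move=> i j k ij ik jk; rewrite relsA_x_xy // relsA_y_xy.
by move=> i j ij; rewrite relsA_xD_xy // relsA_yD_xy.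
Qed.

Let a (i : 'I_n) := tailsum x i.
Let b (i : 'I_n) := tailsum y i.

Lemma relsA_sumx_yx p q : br (\sum_(j < n) x j) (br (y q) (x p)) = 0.
Proof.
rewrite br_derivation relsA_sumx_y // br0l add0r br_suml big1 ?br0r // => j _.
exact: relsA_xx.
Qed.

Lemma relsA_sumy_yx p q : br (\sum_(j < n) y j) (br (y q) (x p)) = 0.
Proof.
rewrite br_derivation relsA_sumy_x // br0r addr0 br_suml big1 ?br0l // => j _.
exact: relsA_yy.
Qed.

Lemma relsA_tailsumx_yx i (p q : 'I_n) : (i <= p < q)%N ->
  br (tailsum x i) (br (y q) (x p)) = 0.
Proof.
move=> /andP [ip pq]; rewrite tailsum_head brBl relsA_sumx_yx // sub0r br_suml.
rewrite big1 ?oppr0 // => j ji; rewrite (br_anti (y q)) brNr relsA_x_xy ?oppr0 //.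
all: by apply/eqP => /(congr1 val) /=; lia.
Qed.

Lemma relsA_tailsumy_yx i (p q : 'I_n) : (i <= p < q)%N ->
  br (tailsum y i) (br (y q) (x p)) = 0.
Proof.
move=> /andP [ip pq]; rewrite tailsum_head brBl relsA_sumy_yx // sub0r br_suml.
rewrite big1 ?oppr0 // => j ji; rewrite (br_anti (y q)) brNr relsA_y_xy ?oppr0 //.
all: by apply/eqP => /(congr1 val) /=; lia.
Qed.

(* c_jk = -sum_{q >= k} sum_{j <= p < k} [y_q, x_p]. *)
Lemma br_cB_tailsum z (j k : 'I_n) : (j <= k)%N ->
  (forall p q : 'I_n, (j <= p < k)%N -> (k <= q)%N -> br z (br (y q) (x p)) = 0) ->
  br z (cB a b j k) = 0.
Proof.
move=> jk z_yx; rewrite /cB /a (tailsum_split x jk) opprD addrA subrr add0r.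
rewrite brNr brNr /b /tailsum br_suml br_sumr big1 ?oppr0 // => q kq.
by rewrite !br_sumr big1 // => p jpk; apply: z_yx.
Qed.

Lemma relsA_relsB : relsB a b.
Proof.
split.
- move=> i j; rewrite /a /b /tailsum !br_suml.
  by split; apply: big1 => p _; rewrite br_sumr big1 // => q _;
    [exact: relsA_xx | exact: relsA_yy].
- move=> i j i0; rewrite /a /b /= i0 !tailsum0 /tailsum !br_sumr.
  by split; apply: big1 => q _; [exact: relsA_sumx_y | exact: relsA_sumy_x].
- move=> j k; rewrite /a /b /tailsum !br_suml.
  under eq_bigr do rewrite br_sumr; under [RHS]eq_bigr do rewrite br_sumr.
  rewrite exchange_big; apply: eq_bigr => q _; apply: eq_bigr => p _.
  exact: relsA_xy_sym.
- move=> i j k ij jk; split; apply: br_cB_tailsum => // p q /andP [jp pk] kq.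
    by apply: relsA_tailsumx_yx; rewrite (leq_trans ij jp) (leq_trans pk kq).
  by apply: relsA_tailsumy_yx; rewrite (leq_trans ij jp) (leq_trans pk kq).
Qed.

End RelationsA.

Section RelationsB.
Variables (K : fieldType) (n : nat) (M : lieAlgebra K) (a b : 'I_n -> M).
Hypothesis HB : relsB a b.

Let X k := tail_diff a k.
Let Y k := tail_diff b k.

Lemma relsB_ext0_aa p q : br (ext0 a p) (ext0 a q) = 0.
Proof.
have [pn|np] := ltnP p n; last by rewrite ext0_ge ?br0l.
have [qn|nq] := ltnP q n; last by rewrite (ext0_ge a nq) br0r.
case: HB => aa_bb _ _ _; rewrite (ext0_lt a pn) (ext0_lt a qn).
by case: (aa_bb (Ordinal pn) (Ordinal qn)).
Qed.

Lemma relsB_ext0_bb p q : br (ext0 b p) (ext0 b q) = 0.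
Proof.
have [pn|np] := ltnP p n; last by rewrite ext0_ge ?br0l.
have [qn|nq] := ltnP q n; last by rewrite (ext0_ge b nq) br0r.
case: HB => aa_bb _ _ _; rewrite (ext0_lt b pn) (ext0_lt b qn).
by case: (aa_bb (Ordinal pn) (Ordinal qn)).
Qed.

Lemma relsB_ext0_ab_sym p q : br (ext0 a p) (ext0 b q) = br (ext0 a q) (ext0 b p).
Proof.
have [pn|np] := ltnP p n; last by rewrite !(ext0_ge _ np) br0l br0r.
have [qn|nq] := ltnP q n; last by rewrite !(ext0_ge _ nq) br0l br0r.
case: HB => _ _ ab_sym _.
by rewrite !(ext0_lt a pn, ext0_lt a qn, ext0_lt b pn, ext0_lt b qn) ab_sym.
Qed.

Lemma relsB_ext0_a0b q : br (ext0 a 0) (ext0 b q) = 0.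
Proof.
have [qn|nq] := ltnP q n; last by rewrite (ext0_ge b nq) br0r.
have n0 : (0 < n)%N by apply: leq_ltn_trans qn.
case: HB => _ ab0 _ _; rewrite (ext0_lt a n0) (ext0_lt b qn).
by case: (ab0 (Ordinal n0) (Ordinal qn) erefl).
Qed.

Lemma relsB_ext0_b0a q : br (ext0 b 0) (ext0 a q) = 0.
Proof.
have [qn|nq] := ltnP q n; last by rewrite (ext0_ge a nq) br0r.
have n0 : (0 < n)%N by apply: leq_ltn_trans qn.
case: HB => _ ab0 _ _; rewrite (ext0_lt b n0) (ext0_lt a qn).
by case: (ab0 (Ordinal n0) (Ordinal qn) erefl).
Qed.

Section KilledByC.
Variable c : 'I_n -> M.
Hypothesis c_cB : forall i j k : 'I_n, (i <= j <= k)%N -> br (c i) (cB a b j k) = 0.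

Lemma br_ext0_cB s j k : (s <= j <= k)%N ->
  br (ext0 c s) (br (ext0 b k) (ext0 a j)) = br (ext0 c s) (br (ext0 b k) (ext0 a k)).
Proof.
move=> sjk; have /andP [sj jk] := sjk.
have [kn|nk] := ltnP k n; last by rewrite (ext0_ge b nk) !br0l br0r.
have jn := leq_ltn_trans jk kn; have sn := leq_ltn_trans sj jn.
have /eqP := @c_cB (Ordinal sn) (Ordinal jn) (Ordinal kn) sjk.
rewrite (ext0_lt c sn) (ext0_lt b kn) (ext0_lt a jn) (ext0_lt a kn) /cB !brBr.
by rewrite subr_eq0 => /eqP ->.
Qed.

(* Each of the four terms of [X_q, Y_r] is c_jk-like, with j <= k. *)
Lemma br_ext0_XY s q r : (s <= q < r)%N -> br (ext0 c s) (br (X q) (Y r)) = 0.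
Proof.
move=> /andP [sq qr]; rewrite /X /Y /tail_diff !brBl !brBr.
rewrite !(br_anti (ext0 a _) (ext0 b _)) !brNr.
rewrite (@br_ext0_cB _ q r) ?(@br_ext0_cB _ q.+1 r) ?(@br_ext0_cB _ q r.+1)
  ?(@br_ext0_cB _ q.+1 r.+1) ?subrr //; apply/andP; lia.
Qed.

End KilledByC.

Lemma relsB_XY_sym p q : br (X p) (Y q) = br (X q) (Y p).
Proof.
rewrite /X /Y /tail_diff !brBl !brBr !(relsB_ext0_ab_sym p) !(relsB_ext0_ab_sym p.+1).
by rewrite !opprB addrACA [RHS]addrACA [in LHS](addrC (- _)).
Qed.

Lemma relsB_XX p q : br (X p) (X q) = 0.
Proof. by rewrite /X /tail_diff !brBl !brBr !relsB_ext0_aa !subrr. Qed.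

Lemma relsB_YY p q : br (Y p) (Y q) = 0.
Proof. by rewrite /Y /tail_diff !brBl !brBr !relsB_ext0_bb !subrr. Qed.

Lemma relsB_relsA : relsA (fun i : 'I_n => X i) (fun i => Y i).
Proof.
have [_ _ _ cubic] := HB.
have a_cB (i j k : 'I_n) : (i <= j <= k)%N -> br (a i) (cB a b j k) = 0.
  by move=> /andP [ij jk]; case: (cubic i j k ij jk).
have b_cB (i j k : 'I_n) : (i <= j <= k)%N -> br (b i) (cB a b j k) = 0.
  by move=> /andP [ij jk]; case: (cubic i j k ij jk).
split.
- by move=> i j _; exact: relsB_XY_sym.
- by move=> i j; rewrite relsB_XX relsB_YY.
- move=> i; rewrite -!tailsum0 !tailsum_tail_diff /Y /X /tail_diff !brBr.
  by rewrite !relsB_ext0_a0b !relsB_ext0_b0a !subrr.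
- move=> i j k ij ik jk; split.
    apply: (sorted_vanish_distinct (F := fun p q r => br (X p) (br (X q) (Y r)))) => //.
    + move=> p q r /andP [pq qr]; rewrite {1}/X /tail_diff brBl.
      by rewrite !(br_ext0_XY a_cB) ?subrr //; apply/andP; lia.
    + by move=> p q r; rewrite br_derivation relsB_XX br0l add0r.
    + by move=> p q r; rewrite relsB_XY_sym.
  apply: (sorted_vanish_distinct (F := fun p q r => br (Y p) (br (Y q) (X r)))) => //.
  + move=> p q r /andP [pq qr]; rewrite (br_anti (Y q)) !brNr relsB_XY_sym.
    rewrite {1}/Y /tail_diff brBl.
    by rewrite !(br_ext0_XY b_cB) ?subrr ?oppr0 //; apply/andP; lia.
  + by move=> p q r; rewrite br_derivation relsB_YY br0l add0r.
  + by move=> p q r; rewrite (br_anti (Y q)) (br_anti (Y r)) relsB_XY_sym.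
Qed.

End RelationsB.

Section EndomorphismsFixingGenerators.
Variables (K : fieldType) (n : nat) (L : lieAlgebra K) (h : lieHom L L).

Lemma is_t1n_endo_id (x y : 'I_n -> L) t : is_t1n x y t ->
  (forall i, h (x i) = x i) -> (forall i, h (y i) = y i) -> h =1 id.
Proof.
case=> rels univ hx hy; have [_ uniq] := univ L x y t rels.
apply: (uniq h (lieHom_id L)) => //; split=> //; split=> // i j ij.
by case: rels => [_ [_ [_ [xy_t _]]]]; rewrite -xy_t // lie_fun_br hx hy.
Qed.

Lemma is_presA_endo_id (x y : 'I_n -> L) : is_presA x y ->
  (forall i, h (x i) = x i) -> (forall i, h (y i) = y i) -> h =1 id.
Proof.
case=> rels univ hx hy; have [_ uniq] := univ L x y rels.
exact: (uniq h (lieHom_id L)).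
Qed.

Lemma is_presB_endo_id (a b : 'I_n -> L) : is_presB a b ->
  (forall i, h (a i) = a i) -> (forall i, h (b i) = b i) -> h =1 id.
Proof.
case=> rels univ ha hb; have [_ uniq] := univ L a b rels.
exact: (uniq h (lieHom_id L)).
Qed.

End EndomorphismsFixingGenerators.

Theorem mainTheorem4 (K : fieldType) (n : nat) (charK0 : [pchar K] =i pred0)
  (T : lieAlgebra K) (x y : 'I_n -> T) (t : 'I_n -> 'I_n -> T)
  (HT : is_t1n x y t) :
  (forall (A : lieAlgebra K) (xA yA : 'I_n -> A), is_presA xA yA ->
     exists f : lieHom T A, bijective f /\
       (forall i, f (x i) = xA i) /\ (forall i, f (y i) = yA i) /\
       (forall i j, i != j -> f (t i j) = br (xA i) (yA j))) /\
  (forall (B : lieAlgebra K) (a b : 'I_n -> B), is_presB a b ->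
     exists g : lieHom B T, bijective g /\
       (forall i, g (a i) = \sum_(j < n | (i <= j)%N) x j) /\
       (forall i, g (b i) = \sum_(j < n | (i <= j)%N) y j)).
Proof.
have [relsT univT] := HT; have relsAT := t1n_relsA relsT.
split=> [A xA yA HA | B a b HB].
  have [relsAA univA] := HA.
  have [[f [fx [fy ft]]] _] := univT A xA yA _ (relsA_t1n relsAA).
  have [[g [gx gy]] _] := univA T x y relsAT.
  exists f; split=> //; exists g => u.
    by apply: (is_t1n_endo_id (h := lieHom_comp f g) HT) => i /=;
      rewrite ?fx ?gx ?fy ?gy.
  by apply: (is_presA_endo_id (h := lieHom_comp g f) HA) => i /=;
    rewrite ?fx ?gx ?fy ?gy.
have [relsBB univB] := HB.
have [[g [ga gb]] _] := univB T _ _ (relsA_relsB relsAT).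
have [[h [hx [hy _]]] _] := univT B _ _ _ (relsA_t1n (relsB_relsA relsBB)).
exists g; split=> //; exists h => u.
  apply: (is_presB_endo_id (h := lieHom_comp g h) HB) => i /=.
    by rewrite ga (lieHom_tailsum hx).
  by rewrite gb (lieHom_tailsum hy).
apply: (is_t1n_endo_id (h := lieHom_comp h g) HT) => i /=.
  by rewrite hx (lieHom_tail_diff ga).
by rewrite hy (lieHom_tail_diff gb).
Qed.
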